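(* Let $H$ be a graph and $q$ a positive integer. Then $H$ is cross-bipartite swapping in $K_q$ if and only if for all nonempty $A,B\subseteq V(K_q)$ with $A\subseteq B$, \[ \hom(H,K_q[A])\,\hom(H,K_q[B])\le\hom_{\mathrm b}(H\times K_2,K_q[A,B]). \]
   Context: $K_q$ is the loopless complete graph on $q$ vertices; $K_q[A]$ is the induced subgraph on $A$; $\hom$ counts homomorphisms. The tensor product $H\times K_2$ has vertex set $V(H)\times\{1,2\}$ with $(u,i)\sim(v,j)$ iff $uv\in E(H)$ and $i\ne j$. For $A,B\subseteq V(K_q)$, $\hom_{\mathrm b}(H\times K_2,K_q[A,B])$ is the number of homomorphisms $H\times K_2\to K_q$ mapping $V(H)\times\{1\}$ into $A$ and $V(H)\times\{2\}$ into $B$. $H$ is cross-bipartite swapping in $K_q$ if the displayed inequality holds for all $A,B\subseteq V(K_q)$. *)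

From mathcomp Require Import all_boot.
Set Implicit Arguments. Unset Strict Implicit. Unset Printing Implicit Defensive.

(* A graph H is a symmetric irreflexive relation e on a finite vertex type T.
   K_q is the loopless complete graph on 'I_q; K_q[A] is induced on A. *)

Definition homK (T : finType) (e : rel T) (q : nat) (A : {set 'I_q}) : nat :=
  #|[set f : {ffun T -> 'I_q} |
      [forall x, f x \in A] && [forall x, forall y, e x y ==> (f x != f y)]]|.

(* The tensor product H x K_2 on V(H) x {1,2}; side 1 = false, side 2 = true. *)
Definition tensorK2 (T : finType) (e : rel T) : rel (T * bool) :=
  fun x y => e x.1 y.1 && (x.2 != y.2).

Definition homb (T : finType) (e : rel T) (q : nat) (A B : {set 'I_q}) : nat :=
  #|[set f : {ffun T * bool -> 'I_q} |
      [forall x, f x \in (if x.2 then B else A)] &&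
      [forall x, forall y, tensorK2 e x y ==> (f x != f y)]]|.

Definition cross_bipartite_swapping (T : finType) (e : rel T) (q : nat) : Prop :=
  forall A B : {set 'I_q}, homK e A * homK e B <= homb e A B.

From mathcomp Require Import all_boot fingroup perm.

Set Implicit Arguments.
Unset Strict Implicit.
Unset Printing Implicit Defensive.

(* Swapping the two sides of H x K_2 shows that hom_b(H x K_2, K_q[A,B]) is
   symmetric in A and B, so one may assume |A| <= |B|.  A permutation s of the
   colours that fixes A :&: B pointwise then moves A inside B.  Recolouring by s
   does not change hom(H, K_q[A]), and recolouring side 1 of a homomorphism into
   K_q[s(A), B] by s^-1 gives one into K_q[A, B]: a clash s^-1 c = d with d in B
   forces d in A :&: B, hence c = s d = d.  Thus the inequality for the pair
   (s(A), B), where s(A) is a subset of B, implies it for (A, B).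
   The empty cases are separate: hom(H, K_q[set0]) = 0 unless V(H) is empty, and
   then every count is 1. *)

Lemma leq_card_in_into (U V : finType) (X : {set U}) (Y : {set V})
    (F : U -> V) :
  {in X &, injective F} -> {in X, forall x, F x \in Y} -> #|X| <= #|Y|.
Proof.
move=> injF FY; rewrite -(card_in_imset injF); apply: subset_leq_card.
by apply/subsetP => _ /imsetP [x xX ->]; exact: FY.
Qed.

Lemma exists_perm_imset_subset (U : finType) (A B : {set U}) :
  #|A| <= #|B| ->
  exists2 s : {perm U}, s @: A \subset B & {in A :&: B, forall x, s x = x}.
Proof.
have [n] := ubnP #|A :\: B|; elim: n A => // n IHn A ltAn leAB.
have [AB | /subsetPn [a aA aNB]] := boolP (A \subset B).
  exists 1%g => [|x _]; last exact: perm1.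
  by apply/subsetP => _ /imsetP [x xA ->]; rewrite perm1 (subsetP AB).
have [b bB bNA] : exists2 b, b \in B & b \notin A.
  apply/subsetPn; apply: contra aNB => BA.
  by have /eqP -> : B == A by rewrite eqEcard BA.
pose t := tperm a b.
have tA_B : t @: A :\: B \subset (A :\: B) :\ a.
  apply/subsetP => _ /setDP [/imsetP [x xA ->] txNB].
  have xa : a != x by apply: contraNneq txNB => <-; rewrite tpermL.
  have xb : b != x by apply: contraNneq bNA => ->.
  by move: txNB; rewrite tpermD // !inE eq_sym xa xA => ->.
have lt_tAn : #|t @: A :\: B| < n.
  apply: leq_ltn_trans (subset_leq_card tA_B) _.
  by apply: leq_trans (proper_card (properD1 _)) _; rewrite ?inE ?aA ?aNB.
have [|s sAB sfix] := IHn (t @: A) lt_tAn.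
  by rewrite card_imset //; exact: perm_inj.
exists (t * s)%g.
  by rewrite (eq_imset _ (permM t s)) imset_comp.
move=> x /setIP [xA xB]; have tx : t x = x.
  by apply: tpermD; [apply: contraNneq aNB => -> | apply: contraNneq bNA => ->].
by rewrite permM tx sfix // inE -{1}tx imset_f.
Qed.

Section Homomorphisms.

Variables (T : finType) (e : rel T).

Lemma homK_set0 (x : T) (q : nat) : homK e (set0 : {set 'I_q}) = 0.
Proof.
apply/eqP; rewrite cards_eq0; apply/eqP/setP => f; rewrite !inE.
by apply/negP => /andP [/forallP /(_ x)]; rewrite inE.
Qed.

Lemma homK_card0 (q : nat) (A : {set 'I_q}) : #|T| = 0 -> homK e A = 1.
Proof.
move=> T0; have noT (x : T) : False by move: T0; rewrite (cardD1 x).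
rewrite -[RHS](expn0 #|'I_q|) -T0 -card_ffun -cardsT /homK.
by apply: eq_card => f; rewrite !inE; apply/andP; split; apply/forallP => x;
  case: (noT x).
Qed.

Lemma homb_card0 (q : nat) (A B : {set 'I_q}) : #|T| = 0 -> homb e A B = 1.
Proof.
move=> T0; have noT (x : T * bool) : False by move: T0; rewrite (cardD1 x.1).
have TB0 : #|{: T * bool}| = 0 by apply: eq_card0 => x; case: (noT x).
rewrite -[RHS](expn0 #|'I_q|) -TB0 -card_ffun -cardsT /homb.
by apply: eq_card => f; rewrite !inE; apply/andP; split; apply/forallP => x;
  case: (noT x).
Qed.

Lemma homK_imset (q r : nat) (A : {set 'I_q}) (s : 'I_q -> 'I_r) :
  {in A &, injective s} -> homK e A <= homK e (s @: A).
Proof.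
move=> injs; apply: (@leq_card_in_into _ _ _ _
  (fun f : {ffun T -> 'I_q} => [ffun x => s (f x)])).
  move=> f1 f2; rewrite !inE => /andP [/forallP f1A _] /andP [/forallP f2A _].
  move=> /ffunP s_f12; apply/ffunP => x; apply: injs => //.
  by have := s_f12 x; rewrite !ffunE.
move=> f; rewrite !inE => /andP [/forallP fA /forallP f_hom].
apply/andP; split; apply/forallP => x; rewrite ffunE ?imset_f //.
apply/forallP => y; apply/implyP => exy; rewrite ffunE.
by apply: contra (implyP (forallP (f_hom x) y) exy) => /eqP/injs ->.
Qed.

Lemma homb_swap (q : nat) (A B : {set 'I_q}) : homb e B A <= homb e A B.
Proof.
apply: (@leq_card_in_into _ _ _ _
  (fun f : {ffun T * bool -> 'I_q} => [ffun x => f (x.1, ~~ x.2)])).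
  move=> f1 f2 _ _ /ffunP f12; apply/ffunP => [[x b]].
  by have := f12 (x, ~~ b); rewrite !ffunE /= negbK.
move=> f; rewrite !inE => /andP [/forallP fBA /forallP f_hom].
apply/andP; split; apply/forallP => [[x b]]; rewrite ffunE /=.
  by have := fBA (x, ~~ b); case: b.
apply/forallP => [[y c]]; apply/implyP => /andP [/= exy bc]; rewrite ffunE.
apply: (implyP (forallP (f_hom (x, ~~ b)) (y, ~~ c))).
by rewrite /tensorK2 /= exy; case: b c bc => [] [].
Qed.

Lemma homb_perm_left (q : nat) (A B : {set 'I_q}) (s : {perm 'I_q}) :
  {in A :&: B, forall x, s x = x} -> homb e (s @: A) B <= homb e A B.
Proof.
move=> sfix; pose g (f : {ffun T * bool -> 'I_q}) :=
  [ffun x => if x.2 then f x else (s^-1)%g (f x)].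
have sA c : c \in s @: A -> (s^-1)%g c \in A.
  by case/imsetP => a aA ->; rewrite permK.
have no_clash c d : c \in s @: A -> d \in B -> c != d -> (s^-1)%g c != d.
  move=> /sA cA dB; apply: contra => /eqP cd.
  by rewrite -(permKV s c) cd sfix // inE -{1}cd cA dB.
apply: (@leq_card_in_into _ _ _ _ g).
  move=> f1 f2 _ _ /ffunP g12; apply/ffunP => x; have := g12 x; rewrite !ffunE.
  by case: ifP => // _; exact: perm_inj.
move=> f; rewrite !inE => /andP [/forallP fAB /forallP f_hom].
apply/andP; split; apply/forallP => x; rewrite !ffunE.
  by have := fAB x; case: ifP => // _; exact: sA.
apply/forallP => y; apply/implyP => exy; rewrite !ffunE.
have := implyP (forallP (f_hom x) y) exy; move: exy (fAB x) (fAB y).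
rewrite /tensorK2; case: x y => [x [|]] [y [|]]; rewrite ?andbF //= => _ fx fy.
  by rewrite eq_sym => /(no_clash _ _ fy fx); rewrite eq_sym.
exact: no_clash.
Qed.

End Homomorphisms.

Theorem lemma6p1 (T : finType) (e : rel T) (e_sym : symmetric e)
    (e_irr : irreflexive e) (q : nat) (q_pos : 0 < q) :
  cross_bipartite_swapping e q <->
  (forall A B : {set 'I_q}, A != set0 -> B != set0 -> A \subset B ->
     homK e A * homK e B <= homb e A B).
Proof.
split=> [swapping A B _ _ _ | nested A B]; first exact: swapping.
have [x _ | T0] := pickP (@predT T); last first.
  by rewrite !homK_card0 ?homb_card0 ?(eq_card0 T0).
have [-> | A0] := eqVneq A set0; first by rewrite (homK_set0 e x).
have [-> | B0] := eqVneq B set0; first by rewrite (homK_set0 e x) muln0.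
wlog leAB : A B A0 B0 / #|A| <= #|B|.
  move=> wlog; have [|/ltnW leBA] := leqP #|A| #|B|; first exact: wlog.
  by rewrite mulnC (leq_trans (wlog _ _ B0 A0 leBA)) ?homb_swap.
have [s sAB sfix] := exists_perm_imset_subset leAB.
apply: leq_trans (homb_perm_left e sfix).
apply: leq_trans (nested _ _ _ B0 sAB); last by rewrite imset_eq0.
by rewrite leq_mul2r homK_imset ?orbT //; exact: in2W perm_inj.
Qed.
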